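(* For all real $\varepsilon\ge0$: $\mathsf{PC}_\mathbb{R}\equiv_W\mathsf{P}_{>\varepsilon}\mathsf{C}_\mathbb{R}$, where $\mathbb R$ carries Lebesgue measure.
   Context: A represented space is a pair $(X,\delta_X)$ with $\delta_X:\subseteq\mathbb{N}^\mathbb{N}\to X$ a partial surjection; $\mathbb R$ carries its Cauchy representation. A realizer of $f:\subseteq X\rightrightarrows Y$ is a partial $F$ with $\delta_Y F(p)\in f(\delta_X(p))$ for all $p\in\mathrm{dom}(f\circ\delta_X)$. $f\le_W g$ if there are computable partial $H,K:\subseteq\mathbb{N}^\mathbb{N}\to\mathbb{N}^\mathbb{N}$ such that $p\mapsto H\langle p,GK(p)\rangle$ realizes $f$ for every realizer $G$ of $g$; $\equiv_W$ is the induced equivalence. $\mathcal{A}_-(\mathbb R)$ denotes the closed subsets of $\mathbb R$ represented by negative information (a name of $A$ enumerates rational open intervals whose union is $\mathbb R\setminus A$). For $\varepsilon\in\mathbb R$, $\mathsf{P}_{>\varepsilon}\mathsf{C}_\mathbb R:\subseteq\mathcal A_-(\mathbb R)\rightrightarrows\mathbb R$, $A\mapsto A$, is defined on closed $A$ with Lebesgue measure $\lambda(A)>\varepsilon$, and $\mathsf{PC}_\mathbb R:=\mathsf P_{>0}\mathsf C_\mathbb R$. *)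

From mathcomp Require Import all_boot all_order all_algebra.
From mathcomp Require Import all_classical all_reals all_analysis.
Set Implicit Arguments. Unset Strict Implicit. Unset Printing Implicit Defensive.
Import Order.TTheory GRing.Theory Num.Theory.
Local Open Scope classical_set_scope.
Local Open Scope ring_scope.

Definition baire := nat -> nat.

(* Cantor pairing on nat and its inverse (diagonal enumeration). *)
Definition npair (x y : nat) : nat := ((x + y) * (x + y).+1)./2 + y.
Fixpoint nunpair (n : nat) : nat * nat :=
  match n with
  | 0 => (0, 0)
  | m.+1 => let: (x, y) := nunpair m in
            if x is x'.+1 then (x', y.+1) else (y.+1, 0)
  end.

Fixpoint code_seq (s : seq nat) : nat :=
  match s with [::] => 0 | x :: s' => (npair x (code_seq s')).+1 end.

Definition bjoin (p q : baire) : baire :=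
  fun n => if odd n then q n./2 else p n./2.

Inductive rcode : Type :=
| RZero : rcode
| RSucc : rcode
| RProj : nat -> rcode
| RComp : rcode -> list rcode -> rcode
| RPrec : rcode -> rcode -> rcode
| RMu   : rcode -> rcode.

Inductive reval : rcode -> seq nat -> nat -> Prop :=
| ev_zero xs : reval RZero xs 0
| ev_succ x xs : reval RSucc (x :: xs) x.+1
| ev_proj i xs : (i < size xs)%N -> reval (RProj i) xs (nth 0%N xs i)
| ev_comp f gs xs ys y :
    revals gs xs ys -> reval f ys y -> reval (RComp f gs) xs y
| ev_prec0 f g xs y : reval f xs y -> reval (RPrec f g) (0%N :: xs) y
| ev_precS f g n xs y z :
    reval (RPrec f g) (n :: xs) y -> reval g (n :: y :: xs) z ->
    reval (RPrec f g) (n.+1 :: xs) z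
| ev_mu f xs n :
    reval f (n :: xs) 0 ->
    (forall m, (m < n)%N -> exists k, reval f (m :: xs) k.+1) ->
    reval (RMu f) xs n
with revals : list rcode -> seq nat -> seq nat -> Prop :=
| evs_nil xs : revals nil xs [::]
| evs_cons g gs xs y ys :
    reval g xs y -> revals gs xs ys -> revals (g :: gs) xs (y :: ys).

Definition computable_nat (g : nat -> nat) : Prop :=
  exists c : rcode, forall x, reval c [:: x] (g x).

Definition computable_word (phi : seq nat -> seq nat) : Prop :=
  exists g : nat -> nat, computable_nat g /\
    forall s, g (code_seq s) = code_seq (phi s).

Definition word_monotone (phi : seq nat -> seq nat) : Prop :=
  forall s t, prefix s t -> prefix (phi s) (phi t).

(* The (partial) function on Baire space induced by a monotone word
   function phi: F(p) = q iff q = sup_m phi(p|m). *)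
Definition word_fun_computes (phi : seq nat -> seq nat) (p q : baire) : Prop :=
  forall n, exists m, (n < size (phi (mkseq p m)))%N /\
                      nth 0%N (phi (mkseq p m)) n = q n.

(* A partial function F :subseteq N^N -> N^N (None = undefined) is
   computable iff some Type-2 machine, given as a computable monotone
   word function, computes F(p) on every p in dom F. *)
Definition computable_partial (F : baire -> option baire) : Prop :=
  exists phi, computable_word phi /\ word_monotone phi /\
    forall p q, F p = Some q -> word_fun_computes phi p q.

(* A representation of X is a partial surjection delta : N^N -> X,
   given here as its graph: [delta p x] iff p is a name of x. *)
Definition representation (X : Type) := baire -> X -> Prop.

(* A partial multivalued function f :subseteq X => Y is given by its
   value sets; dom f = { x | f x is nonempty }. *)
Definition mvfun (X Y : Type) := X -> set Y.

Definition realizes (X Y : Type) (dX : representation X) (dY : representation Y)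
  (f : mvfun X Y) (F : baire -> option baire) : Prop :=
  forall p x, dX p x -> f x !=set0 ->
    exists q, F p = Some q /\ exists y, dY q y /\ f x y.

Definition obind_b (o : option baire) (k : baire -> option baire) :=
  match o with Some a => k a | None => None end.

Definition weihrauch_le (X Y U V : Type)
  (dX : representation X) (dY : representation Y) (f : mvfun X Y)
  (dU : representation U) (dV : representation V) (g : mvfun U V) : Prop :=
  exists H K : baire -> option baire,
    computable_partial H /\ computable_partial K /\
    forall G : baire -> option baire, realizes dU dV g G ->
      realizes dX dY f
        (fun p => obind_b (K p) (fun k => obind_b (G k) (fun r => H (bjoin p r)))).

Definition weihrauch_equiv (X Y U V : Type)
  (dX : representation X) (dY : representation Y) (f : mvfun X Y)
  (dU : representation U) (dV : representation V) (g : mvfun U V) : Prop :=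
  weihrauch_le dX dY f dU dV g /\ weihrauch_le dU dV g dX dY f.

Section Reals.
Variable R : realType.

Definition nuQ (n : nat) : R :=
  let: (a, r) := nunpair n in let: (b, c) := nunpair r in
  (a%:R - b%:R) / (c.+1)%:R.

Definition nuI (n : nat) : set R :=
  let: (i, j) := nunpair n in [set x | nuQ i < x < nuQ j].

Definition delta_cauchy : representation R :=
  fun p x => forall n, `|nuQ (p n) - x| <= (2%:R ^- n : R).

Definition delta_closed_neg : representation (set R) :=
  fun p A => ~` A = \bigcup_n nuI (p n).

Definition P_gt_C_R (eps : R) : mvfun (set R) R :=
  fun A => [set x | (eps%:E < lebesgue_measure A)%E /\ A x].

End Reals.

(* P_{>eps}C_R reduces to PC_R by the identity, since lambda(A) > eps >= 0 gives
   lambda(A) > 0.  Conversely, a name of a closed set A of positive measure is computably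
   turned into a name of the closed set [spread A]: slot [2s, 2s + 1] holds a translate
   of the unit piece of A indexed by the first component z of s, so every piece of A is
   copied infinitely often, and a piece of positive measure makes lambda(spread A)
   infinite, in particular > eps.  A point of [spread A] lies in a slot that can be read
   off from an approximation to within 1/4, and translating it back yields a point of A. *)

From mathcomp Require Import all_boot all_order all_algebra.
From mathcomp Require Import all_classical all_reals all_analysis.
From mathcomp Require Import zify ring lra measurable_realfun.
Import Order.TTheory GRing.Theory Num.Theory.

Set Implicit Arguments. Unset Strict Implicit. Unset Printing Implicit Defensive.

(** * Recursive functions of fixed arity *)

Definition recursive (k : nat) (f : seq nat -> nat) : Prop :=
  exists c : rcode, forall xs, size xs = k -> reval c xs (f xs).

Definition recursive1 (f : nat -> nat) := recursive 1 (fun xs => f (nth 0 xs 0)).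
Definition recursive2 (f : nat -> nat -> nat) :=
  recursive 2 (fun xs => f (nth 0 xs 0) (nth 0 xs 1)).
Definition recursive3 (f : nat -> nat -> nat -> nat) :=
  recursive 3 (fun xs => f (nth 0 xs 0) (nth 0 xs 1) (nth 0 xs 2)).

Lemma recursive_ext k f g :
  (forall xs, size xs = k -> f xs = g xs) -> recursive k f -> recursive k g.
Proof. by move=> fg [c Hc]; exists c => xs Hs; rewrite -fg //; apply: Hc. Qed.

Lemma recursive_proj k i : i < k -> recursive k (fun xs => nth 0 xs i).
Proof. by move=> ik; exists (RProj i) => xs Hs; constructor; rewrite Hs. Qed.

Fixpoint all_recursive k (fs : seq (seq nat -> nat)) : Prop :=
  if fs is f :: fs' then recursive k f /\ all_recursive k fs' else True.

Lemma all_recursive_revals k fs : all_recursive k fs ->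
  exists cs, forall xs, size xs = k -> revals cs xs [seq f xs | f <- fs].
Proof.
elim: fs => [|f fs IH] /=; first by exists nil => xs _; constructor.
case=> [[c Hc] /IH [cs Hcs]]; exists (c :: cs) => xs Hs.
by constructor; [apply: Hc | apply: Hcs].
Qed.

Lemma recursive_comp k f fs : recursive (size fs) f -> all_recursive k fs ->
  recursive k (fun xs => f [seq g xs | g <- fs]).
Proof.
move=> [c Hc] /all_recursive_revals [cs Hcs]; exists (RComp c cs) => xs Hs.
by apply: ev_comp (Hcs _ Hs) _; apply: Hc; rewrite size_map.
Qed.

Lemma recursive_comp1 k f g : recursive1 f -> recursive k g ->
  recursive k (fun xs => f (g xs)).
Proof. by move=> Hf Hg; apply: (recursive_comp (fs := [:: g])) Hf _. Qed.

Lemma recursive_comp2 k f g1 g2 : recursive2 f -> recursive k g1 -> recursive k g2 ->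
  recursive k (fun xs => f (g1 xs) (g2 xs)).
Proof. by move=> Hf H1 H2; apply: (recursive_comp (fs := [:: g1; g2])) Hf _. Qed.

Lemma recursive_comp3 k f g1 g2 g3 : recursive3 f ->
  recursive k g1 -> recursive k g2 -> recursive k g3 ->
  recursive k (fun xs => f (g1 xs) (g2 xs) (g3 xs)).
Proof. by move=> Hf H1 H2 H3; apply: (recursive_comp (fs := [:: g1; g2; g3])) Hf _. Qed.

Fixpoint prim_rec (f g : seq nat -> nat) n ys :=
  if n is m.+1 then g (m :: prim_rec f g m ys :: ys) else f ys.

Lemma recursive_prim_rec k f g : recursive k f -> recursive k.+2 g ->
  recursive k.+1 (fun xs => prim_rec f g (head 0 xs) (behead xs)).
Proof.
move=> [cf Hf] [cg Hg]; exists (RPrec cf cg) => [[|n ys]] //= [Hs].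
elim: n => [|n IH] /=; first by constructor; apply: Hf.
by apply: ev_precS IH _; apply: Hg => /=; rewrite Hs.
Qed.

Lemma recursive_prim_rec1 f g (h : nat -> nat -> nat) : recursive1 f -> recursive3 g ->
  (forall y, h 0 y = f y) -> (forall n y, h n.+1 y = g n (h n y) y) -> recursive2 h.
Proof.
move=> Hf Hg h0 hS; apply: recursive_ext (recursive_prim_rec Hf Hg).
move=> [|n [|y [|]]] //= _.
by elim: n => [|n IH] /=; rewrite ?h0 ?hS ?IH.
Qed.

Lemma recursive_prim_rec2 f g (h : nat -> nat -> nat -> nat) : recursive2 f ->
  recursive 4 (fun xs => g (nth 0 xs 0) (nth 0 xs 1) (nth 0 xs 2) (nth 0 xs 3)) ->
  (forall y z, h 0 y z = f y z) -> (forall n y z, h n.+1 y z = g n (h n y z) y z) ->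
  recursive3 h.
Proof.
move=> Hf Hg h0 hS; apply: recursive_ext (recursive_prim_rec Hf Hg).
move=> [|n [|y [|z [|]]]] //= _.
by elim: n => [|n IH] /=; rewrite ?h0 ?hS ?IH.
Qed.

Lemma recursive_mu k f h : recursive k.+1 f ->
  (forall xs, size xs = k ->
     f (h xs :: xs) = 0 /\ forall m, m < h xs -> f (m :: xs) <> 0) ->
  recursive k h.
Proof.
move=> [c Hc] hmin; exists (RMu c) => xs Hs; have [h0 hlt] := hmin xs Hs.
apply: ev_mu; first by rewrite -h0; apply: Hc => /=; rewrite Hs.
move=> m /hlt fm; exists (f (m :: xs)).-1; rewrite prednK; last by case: (f _) fm.
by apply: Hc => /=; rewrite Hs.
Qed.

Create HintDb recursive.
#[local] Hint Resolve recursive_proj : recursive.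
#[local] Hint Extern 0 (is_true _) => done : recursive.

Ltac recursive_auto := solve [typeclasses eauto with recursive].

Lemma recursive_succ k f : recursive k f -> recursive k (fun xs => (f xs).+1).
Proof.
apply: recursive_comp1.
by exists RSucc => [[|x [|]]] //= _; constructor.
Qed.

Lemma recursive_const k n : recursive k (fun _ => n).
Proof.
elim: n => [|n IH]; last exact: recursive_succ.
by exists RZero => xs _; constructor.
Qed.

#[local] Hint Resolve recursive_succ recursive_const : recursive.

Lemma recursive_add k f g : recursive k f -> recursive k g ->
  recursive k (fun xs => f xs + g xs).
Proof.
by apply: recursive_comp2;
  apply: (recursive_prim_rec1 (f := fun y => y) (g := fun _ a _ => a.+1)) => //;
  rewrite /recursive1 /recursive3; recursive_auto.
Qed.

#[local] Hint Resolve recursive_add : recursive.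

Lemma recursive_mul k f g : recursive k f -> recursive k g ->
  recursive k (fun xs => f xs * g xs).
Proof.
by apply: recursive_comp2;
  apply: (recursive_prim_rec1 (f := fun _ => 0) (g := fun _ a y => y + a)) => //;
  rewrite /recursive1 /recursive3; recursive_auto.
Qed.

Lemma recursive_if0 k c a b : recursive k c -> recursive k a -> recursive k b ->
  recursive k (fun xs => if c xs is 0 then a xs else b xs).
Proof.
apply: (recursive_comp3 (f := fun c a b => if c is 0 then a else b)).
by apply: (recursive_prim_rec2 (f := fun a _ => a) (g := fun _ _ _ b => b)) => //;
  rewrite /recursive2; recursive_auto.
Qed.

Lemma recursive_pred k f : recursive k f -> recursive k (fun xs => (f xs).-1).
Proof.
move=> Hf; have Hpred2 : recursive2 (fun n (_ : nat) => n.-1).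
  by apply: (recursive_prim_rec1 (f := fun _ => 0) (g := fun n _ _ => n)) => //;
    rewrite /recursive1 /recursive3; recursive_auto.
exact: (recursive_comp2 Hpred2 Hf (recursive_const k 0)).
Qed.

#[local] Hint Resolve recursive_mul recursive_if0 recursive_pred : recursive.

Lemma recursive_sub k f g : recursive k f -> recursive k g ->
  recursive k (fun xs => f xs - g xs).
Proof.
move=> Hf Hg; have Hsubr : recursive2 (fun y x => x - y).
  apply: (recursive_prim_rec1 (f := fun y => y) (g := fun _ a _ => a.-1)) => [||y|n y].
  - by rewrite /recursive1; recursive_auto.
  - by rewrite /recursive3; recursive_auto.
  - by rewrite subn0.
  - by rewrite subnS.
exact: (recursive_comp2 Hsubr Hg Hf).
Qed.

#[local] Hint Resolve recursive_sub : recursive.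

Lemma recursive_double k f : recursive k f -> recursive k (fun xs => (f xs).*2).
Proof.
by move=> Hf; apply: recursive_ext (recursive_add Hf Hf) => xs _; rewrite addnn.
Qed.

Lemma recursive_if_leq k f g a b : recursive k f -> recursive k g ->
  recursive k a -> recursive k b ->
  recursive k (fun xs => if f xs <= g xs then a xs else b xs).
Proof.
move=> Hf Hg Ha Hb; have := recursive_if0 (recursive_sub Hf Hg) Ha Hb.
by apply: recursive_ext => xs _; rewrite /leq; case: (_ - _).
Qed.

#[local] Hint Resolve recursive_double recursive_if_leq : recursive.

(* Division by [d.+1] is the least [q] with [n < (q + 1) (d + 1)]. *)
Lemma recursive_divS k f g : recursive k f -> recursive k g ->
  recursive k (fun xs => f xs %/ (g xs).+1).
Proof.
apply: (recursive_comp2 (f := fun n d => n %/ d.+1)).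
apply: (recursive_mu (f := fun xs => (nth 0 xs 1).+1 - (nth 0 xs 0).+1 * (nth 0 xs 2).+1)).
  by recursive_auto.
move=> [|n [|d [|]]] //= _; split.
  by apply/eqP; rewrite subn_eq0; apply: ltn_ceil.
move=> m Hm; have := leq_divM n d.+1.
have : m.+1 * d.+1 <= n %/ d.+1 * d.+1 := leq_mul Hm (leqnn _); lia.
Qed.

#[local] Hint Resolve recursive_divS : recursive.

Lemma recursive_half k f : recursive k f -> recursive k (fun xs => (f xs)./2).
Proof.
move=> Hf; apply: recursive_ext (recursive_divS Hf (recursive_const k 1)).
by move=> xs _; rewrite -divn2.
Qed.

#[local] Hint Resolve recursive_half : recursive.

Lemma recursive_odd k f : recursive k f -> recursive k (fun xs => odd (f xs)).
Proof.
move=> Hf; have : recursive k (fun xs => f xs - ((f xs)./2).*2) by recursive_auto.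
by apply: recursive_ext => xs _; have := odd_double_half (f xs); lia.
Qed.

#[local] Hint Resolve recursive_odd : recursive.

Lemma recursive_if_odd k c a b : recursive k c -> recursive k a -> recursive k b ->
  recursive k (fun xs => if odd (c xs) then a xs else b xs).
Proof.
move=> Hc Ha Hb; have : recursive k (fun xs => if odd (c xs) : nat is 0 then b xs else a xs).
  by recursive_auto.
by apply: recursive_ext => xs _; case: odd.
Qed.

#[local] Hint Resolve recursive_if_odd : recursive.

(** * Pairing and sequence codes *)

Definition triangle w := (w * w.+1)./2.
Arguments triangle : simpl never.
Arguments npair : simpl never.

Lemma triangleS w : triangle w.+1 = triangle w + w.+1.
Proof. rewrite /triangle; lia. Qed.

Lemma leq_triangle m n : m <= n -> triangle m <= triangle n.
Proof. by move=> mn; apply/half_leq/leq_mul. Qed.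

Lemma npairE x y : npair x y = triangle (x + y) + y.
Proof. by []. Qed.

Lemma npair_bounds x y : triangle (x + y) <= npair x y < triangle (x + y).+1.
Proof. rewrite npairE triangleS; lia. Qed.

Lemma nunpairK n : npair (nunpair n).1 (nunpair n).2 = n.
Proof.
elim: n => [|n IH] //; cbn [nunpair].
case: (nunpair n) IH => [[|x] y]; cbn [fst snd]; rewrite !npairE.
  by rewrite add0n !addn0 triangleS; lia.
by rewrite (addnS x y) -addSn; lia.
Qed.

Lemma npair_inj x y x' y' : npair x y = npair x' y' -> x = x' /\ y = y'.
Proof.
move=> E; have /andP[lo hi] := npair_bounds x y.
have /andP[lo' hi'] := npair_bounds x' y'.
rewrite E in lo hi.
have sum_eq : x + y = x' + y'.
  apply/eqP; rewrite eqn_leq; apply/andP; split; rewrite leqNgt; apply/negP.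
    by move=> /leq_triangle; move: lo hi'; clear; lia.
  by move=> /leq_triangle; move: lo' hi; clear; lia.
by move: E; rewrite !npairE sum_eq => E; clear -E sum_eq; lia.
Qed.

Lemma npairK x y : nunpair (npair x y) = (x, y).
Proof.
by have := nunpairK (npair x y); case: (nunpair _) => a b /= /npair_inj [-> ->].
Qed.

Lemma nunpair_snd_leq n : (nunpair n).2 <= n.
Proof. by rewrite -[leqRHS]nunpairK npairE leq_addl. Qed.

Lemma recursive_triangle k f : recursive k f -> recursive k (fun xs => triangle (f xs)).
Proof. by move=> Hf; rewrite /triangle; recursive_auto. Qed.

#[local] Hint Resolve recursive_triangle : recursive.

Lemma recursive_npair k f g : recursive k f -> recursive k g ->
  recursive k (fun xs => npair (f xs) (g xs)).
Proof. by move=> Hf Hg; rewrite /npair; recursive_auto. Qed.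

Definition nunpair_sum n := (nunpair n).1 + (nunpair n).2.

(* The diagonal of [n] is the least [w] with [n < triangle w.+1]. *)
Lemma recursive_nunpair_sum k f : recursive k f ->
  recursive k (fun xs => nunpair_sum (f xs)).
Proof.
apply: recursive_comp1.
apply: (recursive_mu (f := fun xs => (nth 0 xs 1).+1 - triangle (nth 0 xs 0).+1)).
  by recursive_auto.
move=> [|n [|]] //= _; have := npair_bounds (nunpair n).1 (nunpair n).2.
rewrite nunpairK /nunpair_sum => /andP [lo hi]; split; first lia.
by move=> m /leq_triangle; lia.
Qed.

#[local] Hint Resolve recursive_npair recursive_nunpair_sum : recursive.

Lemma nunpair_sndE n : (nunpair n).2 = n - triangle (nunpair_sum n).
Proof. by rewrite -{2}[n]nunpairK npairE addKn. Qed.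

Lemma nunpair_fstE n : (nunpair n).1 = nunpair_sum n - (nunpair n).2.
Proof. by rewrite /nunpair_sum addnK. Qed.

Lemma recursive_nunpair_snd k f : recursive k f ->
  recursive k (fun xs => (nunpair (f xs)).2).
Proof.
move=> Hf; apply: recursive_ext => [xs _|]; first by rewrite nunpair_sndE.
by recursive_auto.
Qed.

#[local] Hint Resolve recursive_nunpair_snd : recursive.

Lemma recursive_nunpair_fst k f : recursive k f ->
  recursive k (fun xs => (nunpair (f xs)).1).
Proof.
move=> Hf; apply: recursive_ext => [xs _|]; first by rewrite nunpair_fstE.
by recursive_auto.
Qed.

#[local] Hint Resolve recursive_nunpair_fst : recursive.

Definition code_head c := (nunpair c.-1).1.
Definition code_tail c := (nunpair c.-1).2.
Definition code_drop i c := iter i code_tail c.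
Definition code_nth c i := code_head (code_drop i c).

Lemma code_tail_cons x s : code_tail (code_seq (x :: s)) = code_seq s.
Proof. by rewrite /code_tail /= npairK. Qed.

Lemma code_head_cons x s : code_head (code_seq (x :: s)) = x.
Proof. by rewrite /code_head /= npairK. Qed.

Lemma code_dropE i s : code_drop i (code_seq s) = code_seq (drop i s).
Proof.
elim: i s => [|i IH] s; first by rewrite drop0.
rewrite /code_drop iterSr -/(code_drop i _); case: s => [|x s]; last first.
  by rewrite code_tail_cons IH.
by rewrite -[code_tail _]/(code_seq [::]) IH.
Qed.

Lemma code_nthE s i : code_nth (code_seq s) i = nth 0 s i.
Proof.
rewrite /code_nth code_dropE -[in RHS](addn0 i) -nth_drop.
by case: (drop i s) => [|x t] //; rewrite code_head_cons.
Qed.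

Lemma code_seq_inj : injective code_seq.
Proof.
by elim=> [|x s IH] [|y t] //= [] /npair_inj [-> /IH ->].
Qed.

Lemma code_seq_surj c : exists s, code_seq s == c.
Proof.
elim/ltn_ind: c => [[|m] IH]; first by exists [::].
have [|s /eqP Hs] := IH (nunpair m).2; first by rewrite ltnS nunpair_snd_leq.
by exists ((nunpair m).1 :: s); rewrite /= Hs nunpairK.
Qed.

Definition code_size c := size (xchoose (code_seq_surj c)).

Lemma code_sizeE s : code_size (code_seq s) = size s.
Proof.
by rewrite /code_size; congr size; apply/code_seq_inj/eqP/(xchooseP (code_seq_surj _)).
Qed.

Lemma recursive_code_drop k f g : recursive k f -> recursive k g ->
  recursive k (fun xs => code_drop (f xs) (g xs)).
Proof.
apply: recursive_comp2.
apply: (recursive_prim_rec1 (f := fun y => y) (g := fun _ a _ => code_tail a)) => //.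
- by rewrite /recursive1; recursive_auto.
- by rewrite /recursive3 /code_tail; recursive_auto.
Qed.

#[local] Hint Resolve recursive_code_drop : recursive.

Lemma recursive_code_nth k f g : recursive k f -> recursive k g ->
  recursive k (fun xs => code_nth (f xs) (g xs)).
Proof. by move=> Hf Hg; rewrite /code_nth /code_head; recursive_auto. Qed.

(* The size of a code is the least number of tails reaching the empty code. *)
Lemma recursive_code_size k f : recursive k f -> recursive k (fun xs => code_size (f xs)).
Proof.
apply: recursive_comp1.
apply: (recursive_mu (f := fun xs => code_drop (nth 0 xs 0) (nth 0 xs 1))).
  by recursive_auto.
move=> [|c [|]] //= _; have [s /eqP <-] := code_seq_surj c.
rewrite code_sizeE code_dropE drop_size; split=> // m ms.
by rewrite code_dropE (drop_nth 0).
Qed.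

#[local] Hint Resolve recursive_code_nth recursive_code_size : recursive.

Fixpoint code_mkseq_rec (F : nat -> nat -> nat) (j L c : nat) :=
  if j is j'.+1 then (npair (F c (L - j'.+1)) (code_mkseq_rec F j' L c)).+1 else 0.

Lemma code_mkseq_recE F j L c : j <= L ->
  code_mkseq_rec F j L c = code_seq (drop (L - j) (mkseq (F c) L)).
Proof.
elim: j => [|j IH] jL /=; first by rewrite subn0 drop_oversize // size_mkseq.
rewrite IH 1?ltnW // [in RHS](drop_nth 0) ?size_mkseq ?nth_mkseq; try lia.
by rewrite -subSn // subSS.
Qed.

Lemma recursive_code_mkseq (F : nat -> nat -> nat) (L : nat -> nat) :
  recursive2 F -> recursive1 L -> recursive1 (fun c => code_seq (mkseq (F c) (L c))).
Proof.
move=> HF HL.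
have Hrec : recursive3 (code_mkseq_rec F).
  apply: (recursive_prim_rec2 (f := fun _ _ => 0)
     (g := fun n a L c => (npair (F c (L - n.+1)) a).+1)) => //.
  - by rewrite /recursive2; recursive_auto.
  - by apply: recursive_succ; apply: recursive_npair; first apply: recursive_comp2 HF _ _;
      recursive_auto.
have := recursive_comp3 Hrec HL HL (recursive_proj (k := 1) (i := 0) erefl).
by apply: recursive_ext => xs _; rewrite code_mkseq_recE // subnn drop0.
Qed.

(** * Type-2 computability of pointwise maps *)

(* Output digit [n] depends only on input digits [a n] and [b n]; after reading the
   first [m] input digits the machine emits the first [L m] output digits. *)
Lemma computable_pointwise (F : nat -> nat -> nat -> nat) (a b L : nat -> nat) :
  recursive3 F -> recursive1 a -> recursive1 b -> recursive1 L ->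
  (forall n m, n < L m -> a n < m /\ b n < m) ->
  {homo L : m n / m <= n} -> (forall n, exists m, n < L m) ->
  computable_partial (fun p => Some (fun n => F (p (a n)) (p (b n)) n)).
Proof.
move=> HF Ha Hb HL abL L_mono L_unbounded.
pose phi (w : seq nat) := mkseq (fun n => F (nth 0 w (a n)) (nth 0 w (b n)) n) (L (size w)).
exists phi; split; [|split].
- exists (fun c => code_seq (mkseq (fun n => F (code_nth c (a n)) (code_nth c (b n)) n)
                                  (L (code_size c)))).
  split; last first.
    by move=> s; rewrite code_sizeE; congr code_seq; apply: eq_mkseq => n; rewrite !code_nthE.
  have Ha' k f : recursive k f -> recursive k (fun xs => a (f xs)) := recursive_comp1 Ha.
  have Hb' k f : recursive k f -> recursive k (fun xs => b (f xs)) := recursive_comp1 Hb.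
  have HL' k f : recursive k f -> recursive k (fun xs => L (f xs)) := recursive_comp1 HL.
  have HF2 : recursive2 (fun c n => F (code_nth c (a n)) (code_nth c (b n)) n).
    by apply: recursive_comp3 HF _ _ _; recursive_auto.
  have [|c Hc] := recursive_code_mkseq HF2 (L := fun c => L (code_size c)).
    by rewrite /recursive1; recursive_auto.
  by exists c => x; apply: (Hc [:: x]).
- move=> s t /prefixP [u ->]; apply/prefixP.
  exists (drop (L (size s)) (phi (s ++ u))).
  have Lsu : L (size s) <= L (size (s ++ u)) by apply: L_mono; rewrite size_cat leq_addr.
  rewrite -[LHS](cat_take_drop (L (size s))); congr (_ ++ _).
  rewrite /phi; apply: (@eq_from_nth _ 0) => [|i]; first by rewrite size_takel ?size_mkseq.
  rewrite size_takel ?size_mkseq // => iL.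
  rewrite nth_take // !nth_mkseq ?(leq_trans iL) //.
  by have [aL bL] := abL _ _ iL; rewrite !nth_cat aL bL.
- move=> p q [<-] n; have [m nL] := L_unbounded n; exists m.
  rewrite /phi size_mkseq size_mkseq nth_mkseq //; split=> //.
  by have [aL bL] := abL _ _ nL; rewrite !nth_mkseq.
Qed.

(** * Codes of rationals, slots, and the two reduction maps *)

Definition qcode a b c := npair a (npair b c).
Definition qpos q := (nunpair q).1.
Definition qneg q := (nunpair (nunpair q).2).1.
Definition qden q := (nunpair (nunpair q).2).2.

Lemma qcodeK q : qcode (qpos q) (qneg q) (qden q) = q.
Proof. by rewrite /qcode /qneg /qden !nunpairK. Qed.

(* Adds the integer [tp - tn] to the rational coded by [q]. *)
Definition qshift q tp tn :=
  qcode (qpos q + tp * (qden q).+1) (qneg q + tn * (qden q).+1) (qden q).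

Definition qle q1 q2 :=
  qpos q1 * (qden q2).+1 + qneg q2 * (qden q1).+1
    <= qpos q2 * (qden q1).+1 + qneg q1 * (qden q2).+1.
Definition qmax q1 q2 := if qle q1 q2 then q2 else q1.
Definition qmin q1 q2 := if qle q1 q2 then q1 else q2.

(* Slot [s] of the spread set is [[2s, 2s + 1]]; it holds a copy of the unit piece
   [slot_piece s] of the original set, translated by [shift_pos s - shift_neg s]. *)
Definition slot_piece s := (nunpair s).1.
Definition shift_pos s :=
  if odd (slot_piece s) then s.*2 + (slot_piece s).+1./2 else s.*2.
Definition shift_neg s := if odd (slot_piece s) then 0 else (slot_piece s)./2.

(* Digit [n] of the name of the spread set: odd [n] carry the input intervals,
   translated and clipped to slots, even [n] cover the gaps and the negative axis. *)
Definition spread_index n := if odd n then (nunpair n./2).2 else 0.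
Definition copy_interval v s :=
  npair (qmax (qshift (nunpair v).1 (shift_pos s) (shift_neg s)) (qcode s.*2 1 0))
        (qmin (qshift (nunpair v).2 (shift_pos s) (shift_neg s)) (qcode s.*2.+2 0 0)).
Definition gap_interval s := npair (qcode s.*2.+1 0 0) (qcode s.*2.+2 0 0).
Definition negative_interval j := npair (qcode 0 j.+1 0) (qcode 0 0 0).
Definition spread_interval v n :=
  if odd n then copy_interval v (nunpair n./2).1
  else if odd n./2 then gap_interval n./2./2 else negative_interval n./2./2.

(* [slot_of x] is [floor ((2 x + 1) / 4)] for the rational [x]. *)
Definition slot_of x := ((qpos x).*2 + (qden x).+1 - (qneg x).*2) %/ (4 * qden x + 3).+1.
Definition unshift x y := qshift y (shift_neg (slot_of x)) (shift_pos (slot_of x)).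

Lemma recursive_qcode k f g h : recursive k f -> recursive k g -> recursive k h ->
  recursive k (fun xs => qcode (f xs) (g xs) (h xs)).
Proof. by move=> *; rewrite /qcode; recursive_auto. Qed.

Lemma recursive_qshift k f g h : recursive k f -> recursive k g -> recursive k h ->
  recursive k (fun xs => qshift (f xs) (g xs) (h xs)).
Proof. by move=> *; rewrite /qshift /qpos /qneg /qden; recursive_auto. Qed.

Lemma recursive_qmax k f g : recursive k f -> recursive k g ->
  recursive k (fun xs => qmax (f xs) (g xs)).
Proof. by move=> *; rewrite /qmax /qle /qpos /qneg /qden; recursive_auto. Qed.

Lemma recursive_qmin k f g : recursive k f -> recursive k g ->
  recursive k (fun xs => qmin (f xs) (g xs)).
Proof. by move=> *; rewrite /qmin /qle /qpos /qneg /qden; recursive_auto. Qed.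

Lemma recursive_shift_pos k f : recursive k f -> recursive k (fun xs => shift_pos (f xs)).
Proof. by move=> *; rewrite /shift_pos /slot_piece; recursive_auto. Qed.

Lemma recursive_shift_neg k f : recursive k f -> recursive k (fun xs => shift_neg (f xs)).
Proof. by move=> *; rewrite /shift_neg /slot_piece; recursive_auto. Qed.

#[local] Hint Resolve recursive_qcode recursive_qshift recursive_qmax recursive_qmin
  recursive_shift_pos recursive_shift_neg : recursive.

Lemma recursive_spread_index : recursive1 spread_index.
Proof. by rewrite /recursive1 /spread_index; recursive_auto. Qed.

Lemma recursive_spread_interval : recursive3 (fun v _ n => spread_interval v n).
Proof.
rewrite /recursive3 /spread_interval /copy_interval /gap_interval /negative_interval.
by recursive_auto.
Qed.

Lemma recursive_unshift : recursive3 (fun x y _ => unshift x y).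
Proof. by rewrite /recursive3 /unshift /slot_of /qpos /qneg /qden; recursive_auto. Qed.

(** * The spread set and its names *)

(* Keeps simplification in the real-valued proofs from unfolding the pairing. *)
Opaque nunpair npair.

Section Spread.
Local Open Scope classical_set_scope.
Local Open Scope ring_scope.
Context {R : realType}.

Lemma nuQ_qcode a b c : nuQ R (qcode a b c) = (a%:R - b%:R) / c.+1%:R.
Proof. by rewrite /nuQ /qcode !npairK. Qed.

Lemma nuQE q : nuQ R q = ((qpos q)%:R - (qneg q)%:R) / (qden q).+1%:R.
Proof. by rewrite -{1}(qcodeK q) nuQ_qcode. Qed.

Lemma nuQ_nat n : nuQ R (qcode n 0 0) = n%:R.
Proof. by rewrite nuQ_qcode subr0 divr1. Qed.

Lemma nuI_npair l h : @nuI R (npair l h) = [set x | nuQ R l < x < nuQ R h].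
Proof. by rewrite /nuI npairK. Qed.

Lemma nuIE n : @nuI R n = [set x | nuQ R (nunpair n).1 < x < nuQ R (nunpair n).2].
Proof. by rewrite -{1}(nunpairK n) nuI_npair. Qed.

Lemma nuQ_qshift q tp tn : nuQ R (qshift q tp tn) = nuQ R q + tp%:R - tn%:R.
Proof.
rewrite /qshift nuQ_qcode nuQE !natrD !natrM.
have d0 : (qden q).+1%:R != 0 :> R by rewrite pnatr_eq0.
by rewrite -natr1 in d0 *; field.
Qed.

Lemma qleE q1 q2 : qle q1 q2 = (nuQ R q1 <= nuQ R q2).
Proof.
rewrite !nuQE /qle -(ler_nat R) !natrD !natrM.
have d1 : 0 < (qden q1).+1%:R :> R by rewrite ltr0n.
have d2 : 0 < (qden q2).+1%:R :> R by rewrite ltr0n.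
by rewrite ler_pdivrMr // mulrAC ler_pdivlMr //; apply/idP/idP => ?; lra.
Qed.

Lemma nuQ_qmax_lt q1 q2 (y : R) :
  (nuQ R (qmax q1 q2) < y) = (nuQ R q1 < y) && (nuQ R q2 < y).
Proof.
rewrite /qmax qleE; have [q12|q12] := leP (nuQ R q1) (nuQ R q2);
  apply/idP/andP => [h|[]//]; split=> //.
  exact: le_lt_trans q12 h.
exact: lt_trans q12 h.
Qed.

Lemma nuQ_qmin_gt q1 q2 (y : R) :
  (y < nuQ R (qmin q1 q2)) = (y < nuQ R q1) && (y < nuQ R q2).
Proof.
rewrite /qmin qleE; have [q12|q12] := leP (nuQ R q1) (nuQ R q2);
  apply/idP/andP => [h|[]//]; split=> //.
  exact: lt_le_trans h q12.
exact: lt_trans h q12.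
Qed.

Definition slot_shift s : R := (shift_pos s)%:R - (shift_neg s)%:R.

Definition spread (A : set R) : set R :=
  [set y | exists s : nat, (s.*2)%:R <= y <= (s.*2.+1)%:R /\ A (y - slot_shift s)].

Lemma nuI_copy_interval v s (x : R) : nuI (copy_interval v s) x <->
  nuI v (x - slot_shift s) /\ (s.*2)%:R - 1 < x < (s.*2.+2)%:R.
Proof.
rewrite /copy_interval nuI_npair nuIE /= nuQ_qmax_lt nuQ_qmin_gt !nuQ_qshift !nuQ_qcode.
rewrite !divr1 subr0 /slot_shift.
split=> [/andP[/andP[l1 l2] /andP[h1 h2]]|[/andP[l1 h1] /andP[l2 h2]]].
  by split; apply/andP; split; lra.
by apply/andP; split; apply/andP; split; lra.
Qed.

Lemma nuI_gap_interval s (x : R) :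
  nuI (gap_interval s) x <-> (s.*2.+1)%:R < x < (s.*2.+2)%:R.
Proof. by rewrite /gap_interval nuI_npair /= !nuQ_nat. Qed.

Lemma nuI_negative_interval j (x : R) : nuI (negative_interval j) x <-> - (j.+1)%:R < x < 0.
Proof. by rewrite /negative_interval nuI_npair /= nuQ_nat nuQ_qcode divr1 sub0r. Qed.

Lemma slot_leq (s s' : nat) (y : R) : (s.*2)%:R <= y -> y < (s'.*2.+2)%:R -> (s <= s')%N.
Proof.
move=> sy ys'; have : (s.*2)%:R < (s'.*2.+2)%:R :> R by exact: le_lt_trans sy ys'.
by rewrite ltr_nat; lia.
Qed.

Lemma slot_geq (s s' : nat) (y : R) : (s'.*2)%:R - 1 < y -> y <= (s.*2.+1)%:R -> (s' <= s)%N.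
Proof.
move=> s'y ys; have : (s'.*2)%:R < (s.*2.+2)%:R :> R.
  by rewrite -[(s.*2.+2)%:R]natr1; lra.
by rewrite ltr_nat; lia.
Qed.

Definition spread_name (p : baire) : baire := fun n => spread_interval (p (spread_index n)) n.

Lemma spread_name_copy p s i : spread_name p (npair s i).*2.+1 = copy_interval (p i) s.
Proof.
by rewrite /spread_name /spread_interval /spread_index oddS odd_double /= uphalf_double npairK.
Qed.

Lemma spread_name_gap p s : spread_name p (s.*2.+1).*2 = gap_interval s.
Proof.
rewrite /spread_name /spread_interval /spread_index odd_double doubleK oddS odd_double /=.
by rewrite uphalf_double.
Qed.

Lemma spread_name_negative p j : spread_name p j.*2.*2 = negative_interval j.
Proof.
by rewrite /spread_name /spread_interval /spread_index !odd_double !doubleK odd_double.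
Qed.

Lemma nonneg_slot (y : R) : 0 <= y -> exists s : nat, (s.*2)%:R <= y < (s.*2.+2)%:R.
Proof.
move=> y0; exists (Num.truncn (y / 2)); set t := Num.truncn _.
have /andP[lo hi] := Num.Theory.truncn_itv (divr_ge0 y0 (ler0n R 2)).
have -> : (t.*2)%:R = t%:R * 2 :> R by rewrite -muln2 natrM.
have -> : (t.*2.+2)%:R = t.+1%:R * 2 :> R by rewrite -natrM; congr _%:R; lia.
by apply/andP; split; move: lo hi; rewrite -/t; lra.
Qed.

Lemma not_spread_covered p (A : set R) y : delta_closed_neg p A ->
  ~ spread A y -> exists n, nuI (spread_name p n) y.
Proof.
move=> pA yA; have [y0|y0] := ltrP y 0.
  rewrite -oppr_gt0 in y0.
  have /andP[_ hi] := Num.Theory.truncn_itv (ltW y0).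
  exists (Num.truncn (- y)).*2.*2; rewrite spread_name_negative.
  by apply/nuI_negative_interval/andP; split; lra.
have [s /andP[lo hi]] := nonneg_slot y0.
have [ys|ys] := lerP y (s.*2.+1)%:R; last first.
  by exists (s.*2.+1).*2; rewrite spread_name_gap; apply/nuI_gap_interval/andP.
have : (~` A) (y - slot_shift s) by move=> Ay; apply: yA; exists s; split=> //; apply/andP.
rewrite pA => -[i _ Ii]; exists (npair s i).*2.+1; rewrite spread_name_copy.
by apply/nuI_copy_interval; split=> //; apply/andP; split; lra.
Qed.

Lemma covered_not_spread p (A : set R) y n : delta_closed_neg p A ->
  nuI (spread_name p n) y -> ~ spread A y.
Proof.
move=> pA + [s' [/andP[lo hi] Ay]].
rewrite /spread_name /spread_interval; case: ifP => _.
  set s := (nunpair n./2).1; move=> /nuI_copy_interval [Iy /andP[lo' hi']].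
  have ss' : s' = s by apply/eqP; rewrite eqn_leq (slot_leq lo hi') (slot_geq lo' hi).
  have : (~` A) (y - slot_shift s) by rewrite pA; exists (spread_index n).
  by rewrite -ss'.
case: ifP => _.
  move=> /nuI_gap_interval /andP[lo' hi']; have := slot_leq lo hi'.
  have : ((n./2./2).*2.+1)%:R < (s'.*2.+1)%:R :> R by exact: lt_le_trans lo' hi.
  by rewrite ltr_nat; lia.
move=> /nuI_negative_interval /andP[_ hi']; move: lo; rewrite leNgt => /negP; apply.
exact: lt_le_trans hi' (ler0n _ _).
Qed.

Lemma spread_nameP p (A : set R) :
  delta_closed_neg p A -> delta_closed_neg (spread_name p) (spread A).
Proof.
move=> pA; apply/seteqP; split=> y.
  by move=> /(not_spread_covered pA) [n In]; exists n.
by move=> [n _ In]; apply: covered_not_spread pA In.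
Qed.

Lemma slot_ofP x s (y : R) : (s.*2)%:R <= y <= (s.*2.+1)%:R ->
  `|nuQ R x - y| <= 4^-1 -> slot_of x = s.
Proof.
move=> /andP[lo hi] /[!ler_norml] /andP[xlo xhi]; rewrite /slot_of.
move: (nuQE x); set a := qpos x; set b := qneg x; set c := qden x => xE.
have c0 : 0 < c.+1%:R :> R by rewrite ltr0n.
have xc : nuQ R x * c.+1%:R = a%:R - b%:R by rewrite xE mulfVK // gt_eqF.
have dbl m : (m.*2)%:R = 2 * m%:R :> R by rewrite -muln2 natrM mulrC.
have num_gt0 : (b.*2 < a.*2 + c.+1)%N.
  rewrite -(ltr_nat R) natrD !dbl.
  have : 0 < (2 * nuQ R x + 1) * c.+1%:R by apply: mulr_gt0 => //; have := ler0n R s.*2; lra.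
  by rewrite mulrDl mul1r -mulrA xc; lra.
have numE : (a.*2 + c.+1 - b.*2)%:R = 2 * (nuQ R x * c.+1%:R) + c.+1%:R :> R.
  by rewrite natrB 1?ltnW // natrD !dbl xc; ring.
have denE : (4 * c + 3).+1%:R = 4 * c.+1%:R :> R by rewrite -natrM; congr _%:R; lia.
rewrite -natr1 dbl in hi; rewrite dbl in lo.
apply/eqP; rewrite eqn_leq -ltnS ltn_divLR // leq_divRL // -(ltr_nat R) -(ler_nat R).
by rewrite numE !natrM denE -!natr1 ?natrD; apply/andP; split; nra.
Qed.

Definition unshift_name (r : baire) : baire := fun n => unshift (r 2) (r n).

Lemma unshift_nameP (A : set R) r y : spread A y -> delta_cauchy r y ->
  exists2 z, A z & delta_cauchy (unshift_name r) z.
Proof.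
move=> [s [ys Ay]] ry; exists (y - slot_shift s) => // n.
have r2 : `|nuQ R (r 2) - y| <= 4^-1 by have := ry 2; rewrite expr2 -natrM.
rewrite /unshift_name /unshift (slot_ofP ys r2) nuQ_qshift /slot_shift.
set tp := (shift_pos s)%:R; set tn := (shift_neg s)%:R.
by have -> : nuQ R (r n) + tn - tp - (y - (tp - tn)) = nuQ R (r n) - y by ring.
Qed.

(** * The spread of a set of positive measure has infinite measure *)

Local Notation mu := (@lebesgue_measure R).

Lemma measurable_nuI n : measurable (nuI n : set (measurableTypeR R)).
Proof.
rewrite nuIE -[X in measurable X](set_itvoo (nuQ R (nunpair n).1) (nuQ R (nunpair n).2)).
exact: measurable_itv.
Qed.

Lemma measurable_closed_name p (A : set R) : delta_closed_neg p A ->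
  measurable (A : set (measurableTypeR R)).
Proof.
move=> pA; rewrite -[A]setCK; apply: measurableC; rewrite pA.
by apply: bigcupT_measurable => n; exact: measurable_nuI.
Qed.

Lemma measurable_fun_subr (t : R) :
  measurable_fun (T := measurableTypeR R) (U := measurableTypeR R) setT (fun x => x - t).
Proof. by apply: measurable_funD => //; exact: measurable_cst. Qed.

Lemma measurable_translate (S : set R) (t : R) : measurable (S : set (measurableTypeR R)) ->
  measurable ([set x | S (x - t)] : set (measurableTypeR R)).
Proof. by move=> mS; have := measurable_fun_subr t measurableT mS; rewrite setTI. Qed.

(* Translation invariance: the pushforward of [mu] along [x - t] agrees with [mu] on
   half-open intervals, hence everywhere by uniqueness of Lebesgue measure. *)
Lemma lebesgue_measure_translate (S : set R) (t : R) :
  measurable (S : set (measurableTypeR R)) -> mu [set x | S (x - t)] = mu S.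
Proof.
move=> mS; pose nu := measure_function_pushforward__canonical__measure_function_Measure
  mu (measurable_fun_subr t).
have -> : mu [set x | S (x - t)] = nu S by [].
apply/esym; apply: (@lebesgue_measure_unique R nu) => //.
move=> X [[a b] _ abX]; rewrite -abX /nu /= /pushforward.
have -> : (fun x : R => x - t) @^-1` `]a, b]%classic = `](a + t), (b + t)]%classic.
  by apply/seteqP; split=> x; rewrite /= !in_itv /= => /andP[? ?]; apply/andP; split; lra.
rewrite !lebesgue_measure_itv /= !lte_fin ltrD2r.
by case: ifP => // _; congr (_%:E); ring.
Qed.

Definition piece_start (z : nat) : R := if odd z then - (z.+1./2)%:R else (z./2)%:R.

Lemma slot_shiftE s : slot_shift s = (s.*2)%:R - piece_start (slot_piece s).
Proof.
rewrite /slot_shift /shift_pos /shift_neg /piece_start.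
by case: odd; rewrite ?natrD /=; ring.
Qed.

Lemma piece_start_cover (x : R) : exists z, piece_start z <= x <= piece_start z + 1.
Proof.
have [x0|x0] := lerP 0 x.
  have /andP[lo hi] := Num.Theory.truncn_itv x0.
  exists (Num.truncn x).*2; rewrite /piece_start odd_double doubleK.
  by rewrite -natr1 in hi; apply/andP; split; lra.
rewrite -oppr_gt0 in x0; have /andP[lo hi] := Num.Theory.truncn_itv (ltW x0).
set n := Num.truncn (- x) in lo hi; have halfE : (n.*2.+2)./2 = n.+1 by lia.
exists n.*2.+1; rewrite /piece_start oddS odd_double halfE /=.
by rewrite -natr1 in hi; apply/andP; split; lra.
Qed.

Definition piece (A : set R) z := A `&` `[piece_start z, piece_start z + 1]%classic.

Lemma measurable_piece (A : set R) z : measurable (A : set (measurableTypeR R)) ->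
  measurable (piece A z : set (measurableTypeR R)).
Proof. by move=> mA; apply: measurableI => //; exact: measurable_itv. Qed.

Lemma piece_gt0 (A : set R) : measurable (A : set (measurableTypeR R)) ->
  (0 < mu A)%E -> exists z, (0 < mu (piece A z))%E.
Proof.
move=> mA A0; apply: contrapT => /forallNP piece0.
have : (mu A <= \sum_(z <oo) mu (piece A z))%E.
  apply: measure_sigma_subadditive => //; first by move=> z; exact: measurable_piece.
  move=> x Ax; have [z zx] := piece_start_cover x.
  by exists z => //; split=> //=; rewrite in_itv.
rewrite eseries0 => [|z _ _]; first by rewrite leNgt A0.
by apply/eqP; rewrite eq_le measure_ge0 andbT leNgt; apply/negP; exact: piece0.
Qed.

Definition piece_copy (A : set R) z j := [set y | piece A z (y - slot_shift (npair z j))].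

Lemma piece_copy_slot (A : set R) z j y : piece_copy A z j y ->
  ((npair z j).*2)%:R <= y <= ((npair z j).*2.+1)%:R.
Proof.
move=> [_ /=]; rewrite in_itv /= slot_shiftE /slot_piece npairK /= -natr1.
by move=> /andP[lo hi]; apply/andP; split; lra.
Qed.

Lemma piece_copy_sub_spread (A : set R) z j : piece_copy A z j `<=` spread A.
Proof. by move=> y yC; exists (npair z j); split; [exact: piece_copy_slot yC | case: yC]. Qed.

Lemma trivIset_piece_copy (A : set R) z : trivIset setT (piece_copy A z).
Proof.
move=> i j _ _ [y [/piece_copy_slot/andP[lo hi] /piece_copy_slot/andP[lo' hi']]].
suff /npair_inj[] : npair z i = npair z j by [].
apply/eqP; rewrite eqn_leq; apply/andP; split.
  by apply: (slot_leq lo); apply: le_lt_trans hi' _; rewrite ltr_nat.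
by apply: (slot_leq lo'); apply: le_lt_trans hi _; rewrite ltr_nat.
Qed.

(* The piece of positive measure is copied into infinitely many slots. *)
Lemma spread_measure_unbounded p (A : set R) (M : R) : delta_closed_neg p A ->
  (0 < mu A)%E -> (M%:E < mu (spread A))%E.
Proof.
move=> pA A0; have mA := measurable_closed_name pA.
have mB := measurable_closed_name (spread_nameP pA).
have [z] := piece_gt0 mA A0; set d := mu (piece A z) => d0.
have mC j : measurable (piece_copy A z j : set (measurableTypeR R)).
  by apply: measurable_translate; exact: measurable_piece.
have copies_le n : (\sum_(j < n) d <= mu (spread A))%E.
  have -> : (\sum_(j < n) d = \sum_(j < n) mu (piece_copy A z j))%E.
    by apply: eq_bigr => j _; rewrite lebesgue_measure_translate //; exact: measurable_piece.
  rewrite -measure_bigsetU //; last exact: trivIset_piece_copy.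
  apply: le_measure; rewrite ?inE //; first exact: bigsetU_measurable.
  by move=> y; rewrite -bigcup_mkord => -[j _]; exact: piece_copy_sub_spread.
move: d0 copies_le; case: d => [r||] //; last first.
  by move=> _ /(_ 1); rewrite big_ord1 leye_eq => /eqP ->; rewrite ltry.
rewrite lte_fin => r0 copies_le.
have := Num.Theory.truncnS_gt (`|M| / r); set n := (Num.truncn _).+1 => Mn.
apply: lt_le_trans (copies_le n); rewrite sumEFin lte_fin sumr_const card_ord -mulr_natl.
by rewrite ltr_pdivrMr // in Mn; have := ler_norm M; lra.
Qed.

End Spread.

Lemma spread_index_leq n : spread_index n <= n.
Proof.
rewrite /spread_index; case: ifP => // _.
by apply: leq_trans (nunpair_snd_leq _) _; rewrite -divn2 leq_div.
Qed.

Lemma bjoin_odd p q n : bjoin p q n.*2.+1 = q n.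
Proof. by rewrite /bjoin oddS odd_double /= uphalf_double. Qed.

Lemma computable_spread_name : computable_partial (fun p => Some (spread_name p)).
Proof.
apply: (computable_pointwise (L := id) recursive_spread_interval
  recursive_spread_index recursive_spread_index) => //.
- exact: recursive_proj.
- by move=> n m nm; split; apply: leq_ltn_trans (spread_index_leq n) nm.
- by move=> n; exists n.+1.
Qed.

(* Reads the precision-[1/4] approximation [r 2] at position [5] of [<p, r>]. *)
Lemma computable_unshift_join :
  computable_partial (fun w => Some (fun n => unshift (w 5) (w n.*2.+1))).
Proof.
apply: (computable_pointwise (a := fun _ => 5) (b := fun n => n.*2.+1)
  (L := fun m => (m - 5)./2) recursive_unshift) => //.
- by rewrite /recursive1; recursive_auto.
- by rewrite /recursive1; recursive_auto.
- by rewrite /recursive1; recursive_auto.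
- by move=> n m; lia.
- by move=> m n; lia.
- by move=> n; exists (n.*2 + 7); lia.
Qed.

Lemma computable_odd_part : computable_partial (fun w => Some (fun n => w n.*2.+1)).
Proof.
apply: (computable_pointwise (F := fun x _ _ => x) (a := fun n => n.*2.+1)
  (b := fun n => n.*2.+1) (L := half)) => //.
- by rewrite /recursive3; recursive_auto.
- by rewrite /recursive1; recursive_auto.
- by rewrite /recursive1; recursive_auto.
- by rewrite /recursive1; recursive_auto.
- by move=> n m; lia.
- by move=> m n; lia.
- by move=> n; exists n.*2.+2; lia.
Qed.

Lemma computable_Some : computable_partial Some.
Proof.
apply: (computable_pointwise (F := fun x _ _ => x) (a := id) (b := id) (L := id)) => //.
- by rewrite /recursive3; recursive_auto.
- by rewrite /recursive1; recursive_auto.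
- by rewrite /recursive1; recursive_auto.
- by rewrite /recursive1; recursive_auto.
- by move=> n; exists n.+1.
Qed.

Section Reductions.
Local Open Scope ring_scope.
Context {R : realType}.

Lemma PC_le_PgtC (eps : R) :
  weihrauch_le (@delta_closed_neg R) (@delta_cauchy R) (P_gt_C_R 0)
               (@delta_closed_neg R) (@delta_cauchy R) (P_gt_C_R eps).
Proof.
exists (fun w => Some (fun n => unshift (w 5) (w n.*2.+1))), (fun p => Some (spread_name p)).
split; [exact: computable_unshift_join | split; [exact: computable_spread_name |]].
move=> G G_realizes p A pA [_ [A0 _]].
have spread_pos := spread_measure_unbounded _ pA A0.
have [y spread_y] : (spread A !=set0)%classic.
  by apply/set0P/eqP => A'0; have := spread_pos 0; rewrite A'0 measure0 ltxx.
have [|q [Gq [y' [qy' [_ spread_y']]]]] := G_realizes _ _ (spread_nameP pA).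
  by exists y.
rewrite /= Gq /=.
have [z Az zq] := unshift_nameP spread_y' qy'.
eexists; split; first reflexivity.
by exists z; split=> // n; rewrite bjoin_odd; exact: zq.
Qed.

Lemma PgtC_le_PC (eps : R) : 0 <= eps ->
  weihrauch_le (@delta_closed_neg R) (@delta_cauchy R) (P_gt_C_R eps)
               (@delta_closed_neg R) (@delta_cauchy R) (P_gt_C_R 0).
Proof.
move=> eps0; exists (fun w => Some (fun n => w n.*2.+1)), Some.
split; [exact: computable_odd_part | split; [exact: computable_Some |]].
move=> G G_realizes p A pA [x [epsA Ax]].
have A0 : (0%:E < lebesgue_measure A)%E by apply: le_lt_trans epsA; rewrite lee_fin.
have [|q [Gq [y [qy [_ Ay]]]]] := G_realizes p A pA; first by exists x.
rewrite /= Gq /=.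
eexists; split; first reflexivity.
by exists y; split=> // n; rewrite bjoin_odd; exact: qy.
Qed.

End Reductions.

Local Open Scope ring_scope.

Theorem theorem11p5 (R : realType) (eps : R) : 0 <= eps ->
  weihrauch_equiv (@delta_closed_neg R) (@delta_cauchy R) (P_gt_C_R 0)
                  (@delta_closed_neg R) (@delta_cauchy R) (P_gt_C_R eps).
Proof. by move=> eps0; split; [exact: PC_le_PgtC | exact: PgtC_le_PC]. Qed.
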